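(* Let $G$ be a finite group, let $\varphi: G\to \mathcal{U}(d)$ be a (non-projective) unitary representation, and let $\ket{\Psi_1},\dots,\ket{\Psi_n}\in\mathbb{C}^d$ be nonzero vectors such that the rank-one operators $A_k=\ket{\Psi_k}\bra{\Psi_k}$ are pairwise distinct, satisfy $\sum_{k=1}^n A_k=\mathbb{1}_d$, and satisfy $\varphi(g)A_k\varphi(g)^\dagger\in\{A_1,\dots,A_n\}$ for all $g\in G$ and all $k$. Let $M=(\ket{\Psi_1}\,\cdots\,\ket{\Psi_n})\in\mathbb{C}^{d\times n}$ be the matrix with columns $\ket{\Psi_k}$. Then there exist a homomorphism $\pi: G\to \mathcal{S}_n$ and a unitary representation $\varphi_{\rm mon}: G\to\mathcal{U}(n)$ all of whose images are monomial matrices, with $\varphi_{\rm mon}(g)e_k = e^{i\phi(g,k)}e_{\pi(g)k}$ for some real phases $\phi(g,k)$, such that $\varphi(g)M = M\varphi_{\rm mon}(g)$ for all $g\in G$.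
   Context: $\mathcal{U}(n)$ is the group of unitary $n\times n$ matrices, $\mathcal{S}_n$ the symmetric group on $n$ symbols, $e_1,\dots,e_n$ the standard basis of $\mathbb{C}^n$. A monomial matrix is a matrix with exactly one nonzero entry in each row and each column. *)

(* Complex numbers are R[i] (mathcomp-real-closed) over a
   real number field R : realType (so R[i] is a model of C). *)
From HB Require Import structures.
From mathcomp Require Import all_boot all_order all_algebra all_fingroup.
From mathcomp Require Import complex.
From mathcomp Require Import reals.
Set Implicit Arguments. Unset Strict Implicit. Unset Printing Implicit Defensive.
Import Order.TTheory GRing.Theory Num.Theory Num.Def.
Local Open Scope ring_scope.
Local Open Scope sesquilinear_scope.

Definition basis_vec {C : nzRingType} {n : nat} (k : 'I_n) : 'cV[C]_n :=
  delta_mx k ord0.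

Definition cols_mx (C : Type) (d n : nat) (Psi : 'I_n -> 'cV[C]_d) : 'M[C]_(d, n) :=
  \matrix_(i < d, k < n) Psi k i ord0.

Definition proj1 (C : numClosedFieldType) (d : nat) (v : 'cV[C]_d) : 'M[C]_d :=
  v *m (v ^t conjC).

From HB Require Import structures.
From mathcomp Require Import all_boot all_order all_algebra all_fingroup.
From mathcomp Require Import complex.
From mathcomp Require Import reals.
Import Order.TTheory GRing.Theory Num.Theory Num.Def.
Local Open Scope ring_scope.
Local Open Scope sesquilinear_scope.
Set Implicit Arguments. Unset Strict Implicit. Unset Printing Implicit Defensive.

(* Two nonzero vectors with the same rank-one projector differ by a phase, so
   phi g Psi_k = c Psi_(pi g k) with |c| = 1, where pi g is the permutation by
   which conjugation by phi g permutes the projectors.  The matrix with entries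
   c in positions (pi g k, k) is monomial, hence unitary, it intertwines phi g
   with the frame matrix M, and the phases form a cocycle because the Psi_k
   are nonzero, which makes g |-> phimon g multiplicative. *)

Section RankOne.
Variables (C : numClosedFieldType) (d : nat).
Implicit Types v w : 'cV[C]_d.

Lemma cV_dotmx_gt0 w : w != 0 -> 0 < (w^t* *m w) 0 0.
Proof.
move=> w_neq0; have -> : (w^t* *m w) 0 0 = dotmx w^T w^T.
  by rewrite dotmxE !mxE; apply: eq_bigr => i _; rewrite !mxE mulrC.
by rewrite dnorm_gt0 trmx_eq0.
Qed.

Lemma proj1_mulmx m (A : 'M[C]_(m, d)) v : proj1 (A *m v) = A *m proj1 v *m A^t*.
Proof. by rewrite /proj1 trmx_mul map_mxM !mulmxA. Qed.

Definition proj_coef v w : C := (w^t* *m v) 0 0 / (w^t* *m w) 0 0.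

Lemma proj1_eq_scale v w : w != 0 -> proj1 v = proj1 w -> v = proj_coef v w *: w.
Proof.
move=> w_neq0 Evw; have nw_neq0 := lt0r_neq0 (cV_dotmx_gt0 w_neq0).
have Enorm : (v^t* *m v) 0 0 = (w^t* *m w) 0 0.
  by rewrite -!trace_mx11 mxtrace_mulC [RHS]mxtrace_mulC; exact: (congr1 mxtrace Evw).
have : w *m (w^t* *m v) = v *m (v^t* *m v).
  by rewrite !mulmxA; congr (_ *m v); exact: (esym Evw).
rewrite [_ *m v]mx11_scalar [v^t* *m v]mx11_scalar !mul_mx_scalar Enorm => Ewv.
by rewrite /proj_coef mulrC -scalerA Ewv scalerA mulVf ?scale1r.
Qed.

Lemma norm_proj_coef v w : w != 0 -> proj1 v = proj1 w -> `|proj_coef v w| = 1.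
Proof.
move=> w_neq0 Evw; have Ev := proj1_eq_scale w_neq0 Evw; set c := proj_coef v w in Ev *.
have Pw_neq0 : proj1 w != 0.
  apply: contraTneq (cV_dotmx_gt0 w_neq0) => Pw0.
  by rewrite -trace_mx11 mxtrace_mulC -/(proj1 w) Pw0 mxtrace0 ltxx.
have : (c * c^*) *: proj1 w = proj1 w.
  by rewrite -[RHS]Evw /proj1 {1 2}Ev linearZ /= map_mxZ -scalemxAl -scalemxAr scalerA.
move/eqP; rewrite -subr_eq0 -{2}(scale1r (proj1 w)) -scalerBl scaler_eq0.
rewrite (negbTE Pw_neq0) orbF subr_eq0 -normCK => /eqP c2.
by apply/eqP; rewrite -sqrp_eq1 ?c2.
Qed.

End RankOne.

Lemma unitary_conj_inj (C : numClosedFieldType) d (U : 'M[C]_d) :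
  U \is unitarymx -> injective (fun A => U *m A *m U^t*).
Proof.
move=> /unitarymxP/mulmx1C UtU A B /(congr1 (fun X => U^t* *m X *m U)).
by rewrite !mulmxA UtU !mul1mx -!mulmxA UtU !mulmx1.
Qed.

Section ProjectorPermutation.
Variables (C : numClosedFieldType) (d n : nat) (Psi : 'I_n -> 'cV[C]_d).
Hypothesis proj1_Psi_inj : injective (fun k => proj1 (Psi k)).

Definition permutes_projs (U : 'M[C]_d) :=
  forall k, exists l, U *m proj1 (Psi k) *m U^t* = proj1 (Psi l).

Definition proj_image (U : 'M[C]_d) (k : 'I_n) : 'I_n :=
  odflt k [pick l | U *m proj1 (Psi k) *m U^t* == proj1 (Psi l)].

(* The identity is a junk fallback, used only when [proj_image U] is not
   injective, which never happens for a unitary [U] permuting the projectors. *)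
Definition proj_image_or_id U : 'I_n -> 'I_n :=
  if injectiveb (proj_image U) then proj_image U else id.

Lemma proj_image_or_id_inj U : injective (proj_image_or_id U).
Proof. by rewrite /proj_image_or_id; case: injectiveP => // _; exact: inj_id. Qed.

Definition proj_perm U : 'S_n := perm (@proj_image_or_id_inj U).

Variable U : 'M[C]_d.
Hypotheses (U_unitary : U \is unitarymx) (U_permutes : permutes_projs U).

Lemma proj_imageP k : U *m proj1 (Psi k) *m U^t* = proj1 (Psi (proj_image U k)).
Proof.
rewrite /proj_image; case: pickP => [l /eqP // | no_l].
by have [l El] := U_permutes k; move: (no_l l); rewrite El eqxx.
Qed.

Lemma proj_image_inj : injective (proj_image U).
Proof.
move=> k k' Ekk'; apply: proj1_Psi_inj; apply: (unitary_conj_inj U_unitary).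
by rewrite /= !proj_imageP Ekk'.
Qed.

Lemma proj_permE k : proj_perm U k = proj_image U k.
Proof.
rewrite permE /proj_image_or_id; case: injectiveP => // no_inj.
by case: (no_inj proj_image_inj).
Qed.

Lemma proj_permP k : U *m proj1 (Psi k) *m U^t* = proj1 (Psi (proj_perm U k)).
Proof. by rewrite proj_permE proj_imageP. Qed.

End ProjectorPermutation.

Lemma conj_mulmx (C : numClosedFieldType) d (U V A : 'M[C]_d) :
  (U *m V) *m A *m (U *m V)^t* = U *m (V *m A *m V^t*) *m U^t*.
Proof. by rewrite trmx_mul map_mxM !mulmxA. Qed.

Lemma proj_permM (C : numClosedFieldType) d n (Psi : 'I_n -> 'cV[C]_d)
    (U V : 'M[C]_d) k :
  injective (fun k => proj1 (Psi k)) ->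
  U \is unitarymx -> permutes_projs Psi U ->
  V \is unitarymx -> permutes_projs Psi V ->
  proj_perm Psi (U *m V) k = proj_perm Psi U (proj_perm Psi V k).
Proof.
move=> Psi_inj Uu Uperm Vu Vperm.
have UVperm : permutes_projs Psi (U *m V).
  by move=> l; exists (proj_perm Psi U (proj_perm Psi V l));
     rewrite conj_mulmx !proj_permP.
apply: (Psi_inj); rewrite /= -proj_permP ?mul_unitarymx //.
by rewrite conj_mulmx !proj_permP.
Qed.

Section Monomial.
Variables (R : nzRingType) (n : nat).

Definition monomial_mx (s : 'S_n) (c : 'I_n -> R) : 'M[R]_n :=
  \matrix_(i, j) ((i == s j)%:R * c j).

Lemma monomial_mx_basis s c k :
  monomial_mx s c *m basis_vec k = c k *: basis_vec (s k).
Proof.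
apply/matrixP => i j; rewrite (ord1 j) /basis_vec -colE !mxE andbT.
by rewrite mulr_natl mulr_natr.
Qed.

Lemma monomial_mxM s t c c' :
  monomial_mx s c *m monomial_mx t c' =
  monomial_mx (t * s)%g (fun j => c (t j) * c' j).
Proof.
apply/matrixP => i j; rewrite !mxE (bigD1 (t j)) //= big1 ?addr0; last first.
  by move=> l /negbTE l_neq; rewrite !mxE l_neq mul0r mulr0.
by rewrite !mxE eqxx mul1r permM mulrA.
Qed.

End Monomial.

Lemma cols_mx_intertwine (R : comNzRingType) d n (A : 'M[R]_d)
    (Psi : 'I_n -> 'cV[R]_d) (s : 'S_n) (c : 'I_n -> R) :
  (forall k, A *m Psi k = c k *: Psi (s k)) ->
  A *m cols_mx Psi = cols_mx Psi *m monomial_mx s c.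
Proof.
move=> APsi; apply/matrixP => i j; rewrite !mxE.
rewrite (bigD1 (s j)) //= [X in _ = _ + X]big1 ?addr0; last first.
  by move=> l /negbTE l_neq; rewrite !mxE l_neq mul0r mulr0.
have := congr1 (fun v : 'cV_d => v i 0) (APsi j); rewrite !mxE eqxx mul1r mulrC => <-.
by apply: eq_bigr => k _; rewrite mxE.
Qed.

Lemma monomial_mx_unitary (C : numClosedFieldType) n (s : 'S_n) (c : 'I_n -> C) :
  (forall j, `|c j| = 1) -> monomial_mx s c \is unitarymx.
Proof.
move=> c_unit; apply/unitarymxP/matrixP => i j; rewrite !mxE.
rewrite (bigD1 (s^-1 i)%g) //= big1 ?addr0; last first.
  move=> l l_neq; rewrite !mxE; case: eqP => [i_sl|]; last by rewrite !mul0r.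
  by move: l_neq; rewrite i_sl permK eqxx.
rewrite !mxE permKV eqxx mul1r rmorphM /= rmorph_nat.
rewrite eq_sym; case: eqP => _; last by rewrite mul0r mulr0.
by rewrite mul1r -normCK c_unit expr1n.
Qed.

Section CovariantFrame.
Variables (C : numClosedFieldType) (gT : finGroupType) (G : {group gT}) (d n : nat).
Variables (phi : gT -> 'M[C]_d) (Psi : 'I_n -> 'cV[C]_d).
Hypothesis phi_unitary : forall g, g \in G -> phi g \is unitarymx.
Hypothesis phiM : forall g h, g \in G -> h \in G -> phi (g * h)%g = phi g *m phi h.
Hypothesis Psi_neq0 : forall k, Psi k != 0.
Hypothesis proj1_Psi_inj : injective (fun k => proj1 (Psi k)).
Hypothesis phi_permutes : forall g, g \in G -> permutes_projs Psi (phi g).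

Definition frame_perm g : 'S_n := proj_perm Psi (phi g).

Definition frame_phase g k : C := proj_coef (phi g *m Psi k) (Psi (frame_perm g k)).

Definition frame_mon g : 'M[C]_n := monomial_mx (frame_perm g) (frame_phase g).

Lemma frame_permM g h k : g \in G -> h \in G ->
  frame_perm (g * h)%g k = frame_perm g (frame_perm h k).
Proof.
move=> gG hG; rewrite /frame_perm phiM //.
exact: proj_permM proj1_Psi_inj (phi_unitary gG) (phi_permutes gG)
  (phi_unitary hG) (phi_permutes hG).
Qed.

Lemma proj1_frame g k : g \in G ->
  proj1 (phi g *m Psi k) = proj1 (Psi (frame_perm g k)).
Proof.
move=> gG; rewrite proj1_mulmx /frame_perm.
exact: (proj_permP proj1_Psi_inj (phi_unitary gG) (phi_permutes gG) k).
Qed.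

Lemma frame_phaseP g k : g \in G ->
  phi g *m Psi k = frame_phase g k *: Psi (frame_perm g k).
Proof. by move=> gG; apply: proj1_eq_scale; rewrite ?proj1_frame. Qed.

Lemma norm_frame_phase g k : g \in G -> `|frame_phase g k| = 1.
Proof. by move=> gG; apply: norm_proj_coef; rewrite ?proj1_frame. Qed.

Lemma frame_phaseM g h k : g \in G -> h \in G ->
  frame_phase (g * h)%g k = frame_phase g (frame_perm h k) * frame_phase h k.
Proof.
move=> gG hG; set l := frame_perm g (frame_perm h k).
have Egh : phi (g * h)%g *m Psi k = frame_phase (g * h)%g k *: Psi l.
  by rewrite frame_phaseP ?groupM // frame_permM.
have Eg_h : phi (g * h)%g *m Psi k =
    (frame_phase g (frame_perm h k) * frame_phase h k) *: Psi l.
  rewrite phiM // -mulmxA frame_phaseP // -scalemxAr frame_phaseP //.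
  by rewrite scalerA mulrC.
apply/eqP; rewrite -subr_eq0.
have : (frame_phase (g * h)%g k -
        frame_phase g (frame_perm h k) * frame_phase h k) *: Psi l == 0.
  by rewrite scalerBl -Egh -Eg_h subrr.
by rewrite scaler_eq0 (negbTE (Psi_neq0 l)) orbF.
Qed.

Lemma frame_monM g h : g \in G -> h \in G ->
  frame_mon (g * h)%g = frame_mon g *m frame_mon h.
Proof.
move=> gG hG; rewrite /frame_mon monomial_mxM; apply/matrixP => i j.
by rewrite !mxE permM frame_permM // frame_phaseM.
Qed.

Lemma frame_mon_unitary g : g \in G -> frame_mon g \is unitarymx.
Proof. by move=> gG; apply: monomial_mx_unitary => k; apply: norm_frame_phase. Qed.

Lemma frame_intertwine g : g \in G ->
  phi g *m cols_mx Psi = cols_mx Psi *m frame_mon g.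
Proof. by move=> gG; apply: cols_mx_intertwine => k; apply: frame_phaseP. Qed.

End CovariantFrame.

Theorem mainTheorem2 (R : realType) (gT : finGroupType) (G : {group gT})
  (d n : nat) (phi : gT -> 'M[R[i]]_d) (Psi : 'I_n -> 'cV[R[i]]_d) :
  (* phi is a unitary representation of G *)
  (forall g, g \in G -> phi g \is unitarymx) ->
  (forall g h, g \in G -> h \in G -> phi (g * h)%g = phi g *m phi h) ->
  (* nonzero vectors, pairwise distinct rank-one projectors summing to 1 *)
  (forall k, Psi k != 0) ->
  (forall k l, proj1 (Psi k) = proj1 (Psi l) -> k = l) ->
  \sum_(k < n) proj1 (Psi k) = 1%:M ->
  (* covariance: the set {A_k} is permuted by conjugation *)
  (forall g k, g \in G ->
     exists l, phi g *m proj1 (Psi k) *m (phi g) ^t conjC = proj1 (Psi l)) ->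
  exists (pi : gT -> 'S_n) (phimon : gT -> 'M[R[i]]_n),
    (* pi is a group homomorphism G -> S_n (composition of functions) *)
    (forall g h k, g \in G -> h \in G -> pi (g * h)%g k = pi g (pi h k)) /\
    (* phimon is a unitary representation of G *)
    (forall g, g \in G -> phimon g \is unitarymx) /\
    (forall g h, g \in G -> h \in G -> phimon (g * h)%g = phimon g *m phimon h) /\
    (* monomial form: phimon(g) e_k = e^{i phase} e_{pi(g) k} *)
    (forall g (k : 'I_n), g \in G -> exists c : R[i],
        `|c| = 1 /\ phimon g *m basis_vec k = c *: basis_vec (pi g k)) /\
    (* intertwining *)
    (forall g, g \in G -> phi g *m cols_mx Psi = cols_mx Psi *m phimon g).
Proof.
move=> phi_unitary phiM Psi_neq0 Psi_inj _ phi_conj_proj.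
have phi_permutes g : g \in G -> permutes_projs Psi (phi g).
  by move=> gG k; exact: phi_conj_proj.
exists (frame_perm phi Psi), (frame_mon phi Psi); split; [|split; [|split; [|split]]].
- by move=> g h k gG hG; apply: (frame_permM (G := G)).
- by move=> g gG; apply: (frame_mon_unitary (G := G)).
- by move=> g h gG hG; apply: (frame_monM (G := G)).
- move=> g k gG; exists (frame_phase phi Psi g k).
  by rewrite monomial_mx_basis; split=> //; apply: (norm_frame_phase (G := G)).
- by move=> g gG; apply: (frame_intertwine (G := G)).
Qed.
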